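(* Let $\mathbb S$ be the free semigroup action on the compact metric space $X$ generated by continuous maps $g_1,\dots,g_p$, and let $K\subset X$ be closed. (i) If $h_{top}(K,\mathbb S)>0$, then $K\cap E_p(X,\mathbb S)\neq\emptyset$. (ii) If $h_{top}(K,\mathbb S)=h_{top}(X,\mathbb S)$, then $K\cap E^f_p(X,\mathbb S)\neq\emptyset$.
   Context: Setting: $(X,d)$ compact metric space, $g_1,\dots,g_p:X\to X$ continuous; $G_n^*$ the set of words $\underline g=g_{i_n}\cdots g_{i_1}$, $i_j\in\{1,\dots,p\}$; $d_{\underline g}(x,y)=\max_{0\le j\le n}d(g_{i_j}\cdots g_{i_1}x,g_{i_j}\cdots g_{i_1}y)$; $s(K,\underline g,\varepsilon)$ the maximal cardinality of a $(\underline g,\varepsilon)$-separated subset of $K$; $h_{top}(K,\mathbb S)=\lim_{\varepsilon\to0}\limsup_n\frac1n\log\big(p^{-n}\sum_{\underline g\in G_n^*}s(K,\underline g,\varepsilon)\big)$. $E_p(X,\mathbb S)$: points $x_0$ with $h_{top}(N,\mathbb S)>0$ for every closed neighbourhood $N$ of $x_0$. $E^f_p(X,\mathbb S)$: points $x_0$ with $h_{top}(N,\mathbb S)=h_{top}(X,\mathbb S)$ for every closed neighbourhood $N$ of $x_0$. *)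

From HB Require Import structures.
From mathcomp Require Import all_boot all_order all_algebra.
From mathcomp Require Import all_classical all_reals all_analysis.
Set Implicit Arguments. Unset Strict Implicit. Unset Printing Implicit Defensive.
Import Order.TTheory GRing.Theory Num.Theory.
Local Open Scope classical_set_scope.
Local Open Scope ring_scope.

Section FreeSemigroupEntropy.
Variables (R : realType) (X : Type) (d : X -> X -> R).

Definition is_metric : Prop :=
  [/\ forall x y, d x y = 0 <-> x = y,
      forall x y, d x y = d y x &
      forall x y z, d x z <= d x y + d y z].

Definition mopen (U : set X) : Prop :=
  forall x, U x -> exists2 e : R, 0 < e & forall y, d x y < e -> U y.

Definition mclosed (F : set X) : Prop := mopen (~` F).

Fixpoint has_elt (I : Type) (s : seq I) (i : I) : Prop :=
  if s is j :: s' then j = i \/ has_elt s' i else False.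

Definition mcompact_space : Prop :=
  forall (I : Type) (U : I -> set X),
    (forall i, mopen (U i)) -> [set: X] `<=` \bigcup_(i in [set: I]) U i ->
    exists s : seq I, forall x, exists2 i, has_elt s i & U i x.

Definition mcontinuous (f : X -> X) : Prop :=
  forall x (e : R), 0 < e -> exists2 del : R, 0 < del &
    forall y, d x y < del -> d (f x) (f y) < e.

Definition closed_nbhd (x0 : X) (N : set X) : Prop :=
  mclosed N /\ exists U, [/\ mopen U, U x0 & U `<=` N].

Variables (p : nat) (g : 'I_p -> X -> X).

(* the word w = [:: i_1; ...; i_n] acts as g_{i_n} o ... o g_{i_1} *)
Definition wapply (w : seq 'I_p) (x : X) : X := foldl (fun y i => g i y) x w.

Definition dword (w : seq 'I_p) (x y : X) : R :=
  \big[Num.max/0]_(j < (size w).+1) d (wapply (take j w) x) (wapply (take j w) y).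

Definition separated_enum (K : set X) (w : seq 'I_p) (eps : R) (k : nat)
    (f : 'I_k -> X) : Prop :=
  [/\ injective f, forall i, K (f i) &
      forall i j, i != j -> eps < dword w (f i) (f j)].

Definition sep_card (K : set X) (w : seq 'I_p) (eps : R) : \bar R :=
  ereal_sup [set k%:R%:E | k in [set k | exists f, separated_enum K w eps (k:=k) f]].

Local Open Scope ereal_scope.

Definition entropy_term (K : set X) (eps : R) (n : nat) : \bar R :=
  ((n%:R)^-1)%:E *
  lne ((((p%:R ^+ n)^-1)%R)%:E * \sum_(w : n.-tuple 'I_p) sep_card K w eps).

Definition htop (K : set X) : \bar R :=
  lim ((fun eps : R => limn_esup (entropy_term K eps)) @ 0%R^'+).

Definition Ep : set X :=
  [set x0 | forall N, closed_nbhd x0 N -> 0 < htop N].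

Definition Epf : set X :=
  [set x0 | forall N, closed_nbhd x0 N -> htop N = htop [set: X]].

End FreeSemigroupEntropy.

From HB Require Import structures.
From mathcomp Require Import all_boot all_order all_algebra.
From mathcomp Require Import all_classical all_reals all_analysis.
From mathcomp Require Import lra.
Import Order.TTheory GRing.Theory Num.Theory.
Set Implicit Arguments. Unset Strict Implicit. Unset Printing Implicit Defensive.
Local Open Scope classical_set_scope.
Local Open Scope ring_scope.
Local Open Scope ereal_scope.

(* It is monotone, h(set0) = -oo, h(X) >= 0 when X is nonempty and p > 0,
   and it is max-subadditive: h(A u B) <= max (h A) (h B).  The last property
   comes from s(A u B, w, eps) <= s(A, w, eps) + s(B, w, eps); after averaging
   over words and taking (1/n) log, the sum costs at most (ln 2)/n, which
   disappears in the limsup.  Hence finite unions of sets whose entropy lies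
   in a class P of values (containing -oo, stable under max and closed
   downwards) again have entropy in P.  Since a closed subset K of the compact
   space X is covered by finitely many of any chosen neighbourhoods of its
   points, this gives a local-to-global principle: if every point of K has a
   closed neighbourhood with entropy in P, then h(K) is in P.  Both parts of
   the theorem follow by contradiction, with P = (<= 0) for E_p and
   P = (< h(X)) for E^f_p. *)

Section ExtendedRealFacts.
Context {R : realType}.
Implicit Types (u v : (\bar R)^nat) (x y : \bar R).

Lemma lee_real_gt x y : (forall r : R, y < r%:E -> x <= r%:E) -> x <= y.
Proof.
case: y => [s| |] bound; last 2 first.
- by rewrite leey.
- case: x bound => [t| |] bound //; last by have := bound 0%R (ltNyr _).
  have := bound (t - 1)%R (ltNyr _); rewrite lee_fin => tt1.
  by exfalso; clear bound; lra.
apply/lee_addgt0Pr => e e0; apply: bound; rewrite lte_fin ltrDl //.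
Qed.

Lemma lte_real_between x (r : R) : x < r%:E -> exists2 s : R, x < s%:E & (s < r)%R.
Proof.
case: x => [t| |] // xr; last by exists (r - 1)%R; [exact: ltNyr | lra].
by exists ((t + r) / 2)%R; rewrite ?lte_fin in xr *; lra.
Qed.

Lemma limn_esup_lt_near u r : limn_esup u < r -> \forall n \near \oo, u n < r.
Proof.
rewrite /limn_esup /limf_esup => /ereal_inf_lt[_ [V V0 <-]] Vr.
apply: filterS V0 => n Vn; apply: le_lt_trans Vr.
by apply: ereal_sup_ubound; exists n.
Qed.

Lemma limn_esup_le_near u r : (\forall n \near \oo, u n <= r) -> limn_esup u <= r.
Proof.
move=> ev_le; rewrite /limn_esup /limf_esup.
apply: (@le_trans _ _ (ereal_sup (u @` [set n | u n <= r]))).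
  by apply: ereal_inf_lbound; exists [set n | u n <= r].
by apply: ge_ereal_sup => _ [n /= ? <-].
Qed.

Lemma le_limn_esup u v : (forall n, u n <= v n) -> limn_esup u <= limn_esup v.
Proof.
move=> uv; apply: lee_real_gt => r /limn_esup_lt_near v_lt.
apply: limn_esup_le_near; apply: filterS v_lt => n vn.
exact: le_trans (uv n) (ltW vn).
Qed.

Lemma limn_esup_le_max u (a b : (\bar R)^nat) (c : R) :
  (forall n, (0 < n)%N -> u n <= maxe (a n) (b n) + (c / n%:R)%:E) ->
  limn_esup u <= maxe (limn_esup a) (limn_esup b).
Proof.
move=> u_le; apply: lee_real_gt => r /lte_real_between [s ms sr].
have /limn_esup_lt_near a_lt : limn_esup a < s%:E.
  by apply: le_lt_trans ms; rewrite le_max lexx.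
have /limn_esup_lt_near b_lt : limn_esup b < s%:E.
  by apply: le_lt_trans ms; rewrite le_max lexx orbT.
apply: limn_esup_le_near; near=> n.
have n0 : (0 < n)%N by near: n; exact: nbhs_infty_gt.
apply: (le_trans (u_le n n0)).
rewrite -[r](subrKC s) EFinD; apply: leeD.
  by rewrite ge_max; apply/andP; split; apply: ltW; near: n.
rewrite lee_fin ler_pdivrMr ?ltr0n //; near: n.
apply: filterS (nbhs_infty_gtr (c / (r - s))%R) => n.
by rewrite ltr_pdivrMr ?subr_gt0 // mulrC => /ltW.
Unshelve. all: by end_near.
Qed.

Lemma lne_le x y : 0 <= x -> x <= y -> lne x <= lne y.
Proof.
move=> x0 xy; have y0 := le_trans x0 xy.
by rewrite lee_lne // in_itv /= leey ?x0 ?y0.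
Qed.

Lemma lne_le_sum_max (u a b : \bar R) (t : R) :
  (0 < t)%R -> 0 <= a -> a <= b -> 0 <= u -> u <= a + b ->
  t%:E * lne u <= t%:E * lne b + (t * ln 2)%:E.
Proof.
move=> t0 a0 ab u0 uab; have b0 := le_trans a0 ab.
have u_le : u <= 2%:E * b.
  apply: (le_trans uab); rewrite -[2%R]/(1 + 1)%R EFinD ge0_muleDl // mul1e.
  exact: leeD.
have [b_eq0|bn0] := eqVneq b 0.
  rewrite b_eq0 mule0 in u_le.
  have -> : u = 0 by apply/eqP; rewrite eq_le u0 andbT.
  by rewrite le0_lneNy // muleC gt0_mulNye ?lte_fin // leNye.
have bpos : 0 < b by rewrite lt_def bn0 b0.
apply: (le_trans (lee_wpmul2l _ (lne_le u0 u_le))); first by rewrite lee_fin ltW.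
rewrite lneM; last 2 first.
- by rewrite in_itv /= leey lte_fin ltr0n.
- by rewrite in_itv /= leey bpos.
by rewrite lne_EFin ?ltr0n // addeC muleDr // fin_num_adde_defl.
Qed.

End ExtendedRealFacts.

Section EntropyOfSets.
Variables (R : realType) (X : Type) (d : X -> X -> R).
Variables (p : nat) (g : 'I_p -> X -> X).
Implicit Types (A B : set X) (w : seq 'I_p) (eps : R).

(* The empty set is separated, so s(A, w, eps) >= 0. *)
Lemma sep_card_ge0 A w eps : 0 <= sep_card d g A w eps.
Proof.
apply: ereal_sup_ubound; exists 0%N => //=.
by exists (fun i : 'I_0 => False_rect X (notF (ltn_ord i))); split => -[].
Qed.

(* A point of A is a separated set on its own. *)
Lemma sep_card_ge1 A w eps x : A x -> 1 <= sep_card d g A w eps.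
Proof.
move=> Ax; apply: ereal_sup_ubound; exists 1%N => //.
by exists (fun=> x); split => // i j; rewrite (ord1 i) (ord1 j) // eqxx.
Qed.

Lemma sep_card_set0 w eps : sep_card d g set0 w eps = 0.
Proof.
apply/eqP; rewrite eq_le sep_card_ge0 andbT.
apply: ge_ereal_sup => _ [[|k] [f [_ f0 _]] <-] //.
by have := f0 ord0.
Qed.

Lemma sep_card_subset A B w eps :
  A `<=` B -> sep_card d g A w eps <= sep_card d g B w eps.
Proof.
move=> AB; apply: ereal_sup_le => _ [k [f [f_inj fA f_sep]] <-].
by exists k => //; exists f; split => // i; apply: AB.
Qed.

(* Separation at a larger scale is a stronger requirement. *)
Lemma sep_card_eps A w (e1 e2 : R) :
  (e1 <= e2)%R -> sep_card d g A w e2 <= sep_card d g A w e1.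
Proof.
move=> e12; apply: ereal_sup_le => _ [k [f [f_inj fA f_sep]] <-].
exists k => //; exists f; split => // i j ij.
exact: le_lt_trans e12 (f_sep i j ij).
Qed.

(* A separated subset of A u B splits into its parts lying in A and in B. *)
Lemma sep_card_setU A B w eps :
  sep_card d g (A `|` B) w eps <= sep_card d g A w eps + sep_card d g B w eps.
Proof.
apply: ge_ereal_sup => _ [k [f [f_inj fAB f_sep]] <-].
have restrict (S : {set 'I_k}) (C : set X) : (forall i, i \in S -> C (f i)) ->
    (#|S|%:R)%:E <= sep_card d g C w eps.
  move=> SC; apply: ereal_sup_ubound; exists #|S| => //.
  exists (fun j => f (enum_val j)); split.
  - by move=> i j /f_inj /enum_val_inj.
  - by move=> i; apply: SC; exact: enum_valP.
  - move=> i j ij; apply: f_sep; apply: contra ij => /eqP /enum_val_inj ->.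
    exact: eqxx.
pose SA : {set 'I_k} := finset (fun i => `[< A (f i) >]).
rewrite -[k]card_ord -(cardsC SA) natrD EFinD; apply: leeD; apply: restrict.
  by move=> i; rewrite inE => /asboolP.
by move=> i; rewrite !inE => /asboolPn nA; case: (fAB i).
Qed.

Lemma entropy_term_le A B (e1 e2 : R) n :
  (forall w, sep_card d g A w e1 <= sep_card d g B w e2) ->
  entropy_term d g A e1 n <= entropy_term d g B e2 n.
Proof.
move=> le_AB; rewrite /entropy_term; apply: lee_wpmul2l.
  by rewrite lee_fin invr_ge0.
apply: lne_le.
  apply: mule_ge0; first by rewrite lee_fin invr_ge0 exprn_ge0.
  by apply: sume_ge0 => w _; exact: sep_card_ge0.
apply: lee_wpmul2l; first by rewrite lee_fin invr_ge0 exprn_ge0.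
by apply: lee_sum => w _.
Qed.

Lemma entropy_term_setU A B eps n : (0 < n)%N ->
  entropy_term d g (A `|` B) eps n <=
  maxe (entropy_term d g A eps n) (entropy_term d g B eps n) + (ln 2 / n%:R)%:E.
Proof.
move=> n0; rewrite /entropy_term mulrC.
set c := ((p%:R ^+ n)^-1)%R%:E.
have c0 : 0 <= c by rewrite lee_fin invr_ge0 exprn_ge0.
have normalized_ge0 C : 0 <= c * \sum_(w : n.-tuple 'I_p) sep_card d g C w eps.
  by apply: mule_ge0 => //; apply: sume_ge0 => w _; exact: sep_card_ge0.
have sum_le : c * \sum_(w : n.-tuple 'I_p) sep_card d g (A `|` B) w eps <=
    c * \sum_(w : n.-tuple 'I_p) sep_card d g A w eps +
    c * \sum_(w : n.-tuple 'I_p) sep_card d g B w eps.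
  rewrite -ge0_muleDr ?sume_ge0 // => [|w _|w _]; try exact: sep_card_ge0.
  apply: lee_wpmul2l => //; rewrite -big_split /=; apply: lee_sum => w _.
  exact: sep_card_setU.
have n_inv_gt0 : (0 < n%:R^-1 :> R)%R by rewrite invr_gt0 ltr0n.
have [le_AB|lt_BA] := leP (c * \sum_(w : n.-tuple 'I_p) sep_card d g A w eps)
                          (c * \sum_(w : n.-tuple 'I_p) sep_card d g B w eps).
  apply: le_trans (lne_le_sum_max n_inv_gt0 _ le_AB _ sum_le) _ => //.
  by apply: leeD => //; rewrite le_max lexx orbT.
apply: le_trans (lne_le_sum_max n_inv_gt0 _ (ltW lt_BA) _ _) _ => //.
  by rewrite addeC.
by apply: leeD => //; rewrite le_max lexx.
Qed.

Definition htop_at (A : set X) (eps : R) : \bar R :=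
  limn_esup (entropy_term d g A eps).

(* The limit eps -> 0+ of a nonincreasing function is its supremum. *)
Lemma htopE A : htop d g A = ereal_sup (htop_at A @` `]0%R, +oo[).
Proof.
rewrite /htop; apply: cvg_lim => //.
apply: (@nonincreasing_at_right_cvge _ (htop_at A) 0%R (BInfty _ false)) => //.
move=> e1 e2 _ _ e12; apply: le_limn_esup => n; apply: entropy_term_le => w.
exact: sep_card_eps.
Qed.

Lemma htop_subset A B : A `<=` B -> htop d g A <= htop d g B.
Proof.
move=> AB; rewrite !htopE; apply: ge_ereal_sup => _ [e e0 <-].
apply: le_trans (ereal_sup_ubound _); last by exists e.
apply: le_limn_esup => n; apply: entropy_term_le => w.
exact: sep_card_subset.
Qed.

Lemma htop_setU A B : htop d g (A `|` B) <= maxe (htop d g A) (htop d g B).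
Proof.
rewrite !htopE; apply: ge_ereal_sup => _ [e e0 <-].
apply: le_trans (limn_esup_le_max (c := ln 2) _) _.
  by move=> n n0; exact: entropy_term_setU.
have at_le C : htop_at C e <= ereal_sup (htop_at C @` `]0%R, +oo[).
  by apply: ereal_sup_ubound; exists e.
by rewrite ge_max !le_max !at_le orbT.
Qed.

(* The empty set has no points to separate: its entropy is -oo. *)
Lemma htop_set0 : htop d g set0 = -oo.
Proof.
apply/eqP; rewrite -leeNy_eq htopE; apply: ge_ereal_sup => _ [e e0 <-].
apply: limn_esup_le_near; near=> n.
have n0 : (0 < n)%N by near: n; exact: nbhs_infty_gt.
rewrite /entropy_term big1 => [|w _]; last exact: sep_card_set0.
rewrite mule0 le0_lneNy // muleC gt0_mulNye //.
by rewrite lte_fin invr_gt0 ltr0n.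
Unshelve. all: by end_near.
Qed.

(* With at least one generator, a nonempty space has nonnegative entropy:
   every word sees a separated set with one point. *)
Lemma htop_setT_ge0 : [set: X] !=set0 -> (0 < p)%N -> 0 <= htop d g [set: X].
Proof.
move=> [x0 _] p0; rewrite htopE.
apply: le_trans (ereal_sup_ubound _); last by exists 1%R => //=; rewrite in_itv /= andbT.
apply: limf_esup_ge0 => // n; rewrite /entropy_term.
apply: mule_ge0; first by rewrite lee_fin invr_ge0.
rewrite lne_ge0.
have c0 : 0 <= (((p%:R ^+ n)^-1)%R)%:E :> \bar R.
  by rewrite lee_fin invr_ge0 exprn_ge0.
have sum_ge : \sum_(w : n.-tuple 'I_p) 1%E <=
    \sum_(w : n.-tuple 'I_p) sep_card d g [set: X] w 1%R.
  by apply: lee_sum => w _; exact: (sep_card_ge1 _ _ (x := x0)).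
apply: le_trans (lee_wpmul2l c0 sum_ge).
rewrite sumEFin sumr_const card_tuple card_ord -EFinM.
by rewrite lee_fin natrX mulVf // expf_neq0 // pnatr_eq0 -lt0n.
Qed.

End EntropyOfSets.

Section FiniteSubcover.
Variables (R : realType) (X : Type) (d : X -> X -> R).

Lemma has_elt_Some_bigU (I : Type) (U : I -> set X) (s : seq (option I)) j y :
  has_elt s (Some j) -> U j y -> (\big[setU/set0]_(i <- pmap id s) U i) y.
Proof.
move=> + Ujy; elim: s => [//|[i|] s IH] /= in_s.
- rewrite big_cons; case: in_s => [[->]|in_s]; [by left | by right; exact: IH].
- by case: in_s => [//|]; exact: IH.
Qed.

(* A closed subset of a compact space covered by open sets is covered by
   finitely many of them (add the open complement of K to the cover). *)
Lemma closed_finite_subcover (I : Type) (U : I -> set X) (K : set X) :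
  mcompact_space d -> mclosed d K -> (forall i, mopen d (U i)) ->
  K `<=` \bigcup_(i in [set: I]) U i ->
  exists s : seq I, K `<=` \big[setU/set0]_(i <- s) U i.
Proof.
move=> cpt Kc Uo KU.
pose V (i : option I) := if i is Some j then U j else ~` K.
have [|y _|s s_cov] := cpt _ V.
- by case=> [j|] /=; [exact: Uo | exact: Kc].
- have [/KU [j _ Ujy]|nKy] := pselect (K y); first by exists (Some j).
  by exists None.
exists (pmap id s) => y Ky; have [[j|] in_s Vy] := s_cov y => //.
exact: has_elt_Some_bigU in_s Vy.
Qed.

End FiniteSubcover.

Section LocalToGlobal.
Variables (R : realType) (X : Type) (d : X -> X -> R).
Variables (p : nat) (g : 'I_p -> X -> X).

(* P is a class of entropy values that contains -oo and is stable under max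
   and under decreasing the value, e.g. (<= 0) or (< htop X). *)
Variable P : \bar R -> Prop.
Hypothesis P_Ny : P -oo.
Hypothesis P_max : forall a b, P a -> P b -> P (maxe a b).
Hypothesis P_down : forall a b, a <= b -> P b -> P a.

(* By max-subadditivity, finite unions of sets with entropy in P have
   entropy in P. *)
Lemma htop_bigU_in (I : Type) (F : I -> set X) (s : seq I) :
  (forall i, P (htop d g (F i))) -> P (htop d g (\big[setU/set0]_(i <- s) F i)).
Proof.
move=> PF; elim: s => [|i s IH]; first by rewrite big_nil htop_set0.
by rewrite big_cons; apply: P_down (htop_setU _ _ _ _) _; exact: P_max.
Qed.

Lemma htop_local_to_global (K : set X) :
  mcompact_space d -> mclosed d K ->
  (forall x, K x -> exists2 N, closed_nbhd d x N & P (htop d g N)) ->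
  P (htop d g K).
Proof.
move=> cpt Kc local.
have nbhd_of (x : {x | K x}) : exists NU : set X * set X,
    [/\ mopen d NU.2, NU.2 (sval x), NU.2 `<=` NU.1 & P (htop d g NU.1)].
  by have [N [_ [U [Uo Ux UN]]] PN] := local _ (svalP x); exists (N, U).
have [NU NU_spec] := choice nbhd_of.
have [|x Kx|s K_cov] := closed_finite_subcover (U := fun x => (NU x).2) cpt Kc.
- by move=> x; have [] := NU_spec x.
- by exists (exist _ x Kx) => //; have [] := NU_spec (exist _ x Kx).
apply: (P_down _ (@htop_bigU_in _ (fun x => (NU x).1) s _)); last first.
  by move=> x; have [] := NU_spec x.
apply: htop_subset => y /K_cov; apply: (big_ind2 (fun A B => A `<=` B)) => //.
- by move=> ? ? ? ?; exact: setUSS.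
- by move=> x _; have [] := NU_spec x.
Qed.

End LocalToGlobal.

Local Close Scope ereal_scope.

Theorem mainTheorem8 (R : realType) (X : Type) (d : X -> X -> R)
  (p : nat) (g : 'I_p -> X -> X) (K : set X) :
  is_metric d -> mcompact_space d -> [set: X] !=set0 -> (0 < p)%N ->
  (forall i, mcontinuous d (g i)) -> mclosed d K ->
  (((0 < htop d g K)%E -> K `&` Ep d g !=set0) /\
   (htop d g K = htop d g [set: X] -> K `&` Epf d g !=set0)).
Proof.
move=> _ cpt X_nonempty p_gt0 _ Kc; split.
- (* otherwise every point of K has a closed neighbourhood of entropy <= 0 *)
  move=> hK_gt0; apply: contrapT => K_Ep_empty.
  suff : (htop d g K <= 0)%E by rewrite leNgt hK_gt0.
  apply: (htop_local_to_global (P := fun a => a <= 0)%E) cpt Kc _.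
  + exact: leNye.
  + by move=> a b a_le0 b_le0; rewrite ge_max a_le0 b_le0.
  + by move=> a b; exact: le_trans.
  move=> x Kx; have /existsNP [N /not_implyP [Nx N_not_gt0]] : ~ Ep d g x.
    by move=> Epx; apply: K_Ep_empty; exists x.
  by exists N; last by rewrite leNgt; apply/negP.
- (* otherwise every point of K has a closed neighbourhood of entropy < h(X) *)
  move=> hK_full; apply: contrapT => K_Epf_empty.
  suff : (htop d g K < htop d g [set: X])%E by rewrite hK_full ltxx.
  apply: (htop_local_to_global (P := fun a => a < htop d g [set: X])%E) cpt Kc _.
  + exact: lt_le_trans (ltNyr 0%R) (htop_setT_ge0 d g X_nonempty p_gt0).
  + by move=> a b a_lt b_lt; rewrite gt_max a_lt b_lt.
  + by move=> a b; exact: le_lt_trans.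
  move=> x Kx; have /existsNP [N /not_implyP [Nx N_not_full]] : ~ Epf d g x.
    by move=> Epfx; apply: K_Epf_empty; exists x.
  exists N; first exact: Nx.
  by rewrite lt_neqAle (htop_subset d g (@subsetT _ N)) andbT; apply/eqP.
Qed.
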